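(* Let $\mathcal{A}=(Q,\delta,I,F)$ be a complete Büchi automaton with $n=|Q|$, let $\mathcal{B}_S=(Q',\delta',I',F')$ be the automaton produced from $\mathcal{A}$ by Schewe's rank-based complementation construction (described in the context), and let $\mathcal{B}_S^{\mathit{di}}$ be the automaton obtained from the same construction in which every occurrence of $Q_2$ (in the state set, in the transition functions $\delta_2,\delta_3$ and in the accepting set) is replaced by $$Q_2^{\mathit{di}} = Q_2\setminus\{(S,O,f,i)\in Q_2 \mid \exists p,q\in S:\ p\preceq_{\mathit{di}} q \wedge f(p)>f(q)\}.$$ Then $\mathcal{L}(\mathcal{B}_S^{\mathit{di}})=\mathcal{L}(\mathcal{B}_S)$.
   Context: Fix a finite nonempty alphabet $\Sigma$. A Büchi automaton (BA) is $\mathcal{A}=(Q,\delta,I,F)$ with finite state set $Q$, transition function $\delta:Q\times\Sigma\to 2^Q$, initial states $I\subseteq Q$ and accepting states $F\subseteq Q$; it is complete if $\delta(q,a)\neq\emptyset$ for all $q,a$. We write $p\xrightarrow{a}q\in\delta$ for $q\in\delta(p,a)$ and $\delta(P,a)=\bigcup_{p\in P}\delta(p,a)$. A run from $q$ on an infinite word $\alpha=\alpha_0\alpha_1\cdots$ is a sequence $\rho_0\rho_1\cdots$ of states with $\rho_0=q$ and $\rho_{i+1}\in\delta(\rho_i,\alpha_i)$; it is accepting if some state of $F$ occurs infinitely often. $\mathcal{L}(\mathcal{A})$ is the set of infinite words having an accepting run from some initial state. A trace over $\alpha$ is a sequence $q_0\xrightarrow{\alpha_0}q_1\xrightarrow{\alpha_1}\cdots$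 where $q_0q_1\cdots$ is a run over $\alpha$. Direct simulation: in the simulation game from $(p_0,r_0)$, in round $i$ Spoiler picks a transition $p_i\xrightarrow{\alpha_i}p_{i+1}$ and Duplicator answers with $r_i\xrightarrow{\alpha_i}r_{i+1}$ on the same symbol; a Duplicator strategy is a map $\sigma$ with $\sigma(r,p\xrightarrow{a}p')\in\delta(r,a)$ (no lookahead). For the resulting traces $\pi_p=p_0\xrightarrow{\alpha_0}p_1\cdots$ and $\pi_r=r_0\xrightarrow{\alpha_0}r_1\cdots$, Duplicator wins the direct game if for all $i$, $p_i\in F$ implies $r_i\in F$. The (maximal) direct simulation $\preceq_{\mathit{di}}$ is defined by $p\preceq_{\mathit{di}}r$ iff Duplicator has a winning strategy from $(p,r)$. Schewe's construction. A (level) ranking is $f:Q\to\{0,1,\dots,2n\}$ with $f(q)$ even for all $q\in F$; $\mathrm{rank}(f)=\max_{q\in Q}f(q)$. For $S\subseteq Q$, $f$ is $S$-tight if (i) $\mathrm{rank}(f)=r$ is odd, (ii) $\{f(s)\mid s\in S\}\supseteq\{1,3,\dots,r\}$, and (iii) $\{f(q)\mid q\notin S\}=\{0\}$; $\mathcal{T}$ is the set of $Q$-tight rankings. The BA $\mathcal{B}_S=(Q',\delta',I',F')$ has: $Q'=Q_1\cup Q_2$ with $Q_1=2^Q$ and $Q_2=\{(S,O,f,i)\in 2^Q\times2^Q\times\mathcal{T}\times\{0,2,\dots,2n-2\}\mid f \text{ is } S\text{-tight},\ O\subseteq S\cap f^{-1}(i)\}$; $I'=\{I\}$; $\delta'=\delta_1\cup\delta_2\cup\delta_3$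 where $\delta_1(S,a)=\{\delta(S,a)\}\subseteq Q_1$ for $S\in Q_1$; $\delta_2(S,a)=\{(S',\emptyset,f,0)\in Q_2\mid S'=\delta(S,a),\ f \text{ is } S'\text{-tight}\}$ for $S\in Q_1$; and for $(S,O,f,i)\in Q_2$, $(S',O',f',i')\in\delta_3((S,O,f,i),a)$ iff $(S',O',f',i')\in Q_2$, $S'=\delta(S,a)$, $f'(q')\le f(q)$ for all $q\in S$ and $q'\in\delta(q,a)$, $\mathrm{rank}(f)=\mathrm{rank}(f')$, $f'$ is $S'$-tight, and either ($O=\emptyset$, $i'=(i+2)\bmod(\mathrm{rank}(f')+1)$ and $O'=f'^{-1}(i')$) or ($O\neq\emptyset$, $i'=i$ and $O'=\delta(O,a)\cap f'^{-1}(i)$); and $F'=\{\emptyset\}\cup\{(S,\emptyset,f,i)\in Q_2\}$. *)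

From mathcomp Require Import all_boot.
Set Implicit Arguments. Unset Strict Implicit. Unset Printing Implicit Defensive.

Record buchi (Sigma : finType) := Buchi {
  bst : finType;
  bdelta : bst -> Sigma -> {set bst};
  binit : {set bst};
  bfin : {set bst} }.

Definition word (Sigma : finType) := nat -> Sigma.

Definition complete (Sigma : finType) (A : buchi Sigma) : Prop :=
  forall (q : bst A) (a : Sigma), bdelta q a != set0.

Definition is_run (Sigma : finType) (A : buchi Sigma) (q : bst A) (alpha : word Sigma)
  (rho : nat -> bst A) : Prop :=
  rho 0 = q /\ forall i, rho i.+1 \in bdelta (rho i) (alpha i).

Record rbuchi (Sigma : finType) := RBuchi {
  rst : Type;
  rtrans : rst -> Sigma -> rst -> Prop;
  rinit : rst -> Prop;
  racc : rst -> Prop }.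

Definition rlang (Sigma : finType) (B : rbuchi Sigma) (alpha : word Sigma) : Prop :=
  exists rho : nat -> rst B,
    @rinit _ B (rho 0) /\ (forall i, @rtrans _ B (rho i) (alpha i) (rho i.+1)) /\
    (forall N, exists m, N <= m /\ @racc _ B (rho m)).

Section Construction.
Variables (Sigma : finType) (A : buchi Sigma).
Local Notation Q := (bst A).
Local Notation delta := (@bdelta _ A).
Local Notation F := (bfin A).

(* a Duplicator strategy: sigma r p a p' is Duplicator's answer from r to
   Spoiler's transition p -a-> p' *)
Definition strategy := Q -> Q -> Sigma -> Q -> Q.

Definition valid_strategy (sg : strategy) : Prop :=
  forall r p a p', p' \in delta p a -> sg r p a p' \in delta r a.

Fixpoint dup_trace (sg : strategy) (r0 : Q) (alpha : word Sigma) (pi : nat -> Q)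
  (i : nat) : Q :=
  match i with
  | 0 => r0
  | k.+1 => sg (dup_trace sg r0 alpha pi k) (pi k) (alpha k) (pi k.+1)
  end.

Definition di_sim (p r : Q) : Prop :=
  exists sg : strategy, valid_strategy sg /\
    forall (alpha : word Sigma) (pi : nat -> Q), is_run p alpha pi ->
      forall i, pi i \in F -> dup_trace sg r alpha pi i \in F.

Definition nQ : nat := #|Q|.

Definition ranking (f : {ffun Q -> nat}) : Prop :=
  (forall q, f q <= 2 * nQ) /\ (forall q, q \in F -> ~~ odd (f q)).

Definition rank (f : {ffun Q -> nat}) : nat := \max_(q : Q) f q.

Definition tight (S : {set Q}) (f : {ffun Q -> nat}) : Prop :=
  [/\ odd (rank f),
      (forall k, odd k -> k <= rank f -> exists2 s, s \in S & f s = k)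
    & (forall q, q \notin S -> f q = 0)].

Definition inT (f : {ffun Q -> nat}) : Prop := ranking f /\ tight [set: Q] f.

Definition preimg (f : {ffun Q -> nat}) (k : nat) : {set Q} := [set q | f q == k].

Definition Q2state : Type := ({set Q} * {set Q} * {ffun Q -> nat} * nat)%type.

Definition inQ2 (x : Q2state) : Prop :=
  let: (S1, O1, f, i) := x in
  [/\ inT f, tight S1 f, ~~ odd i, i.+2 <= 2 * nQ & O1 \subset S1 :&: preimg f i].

Definition inQ2di (x : Q2state) : Prop :=
  inQ2 x /\
  let: (S1, O1, f, i) := x in
  ~ (exists p q, [/\ p \in S1, q \in S1, di_sim p q & f q < f p]).

Definition post (S1 : {set Q}) (a : Sigma) : {set Q} := \bigcup_(q in S1) delta q a.

Definition sstate : Type := ({set Q} + Q2state)%type.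

Definition strans (P : Q2state -> Prop) (x : sstate) (a : Sigma) (y : sstate) : Prop :=
  match x, y with
  | inl S1, inl S2 => S2 = post S1 a
  | inl S1, inr (S2, O2, f, i) =>
      P (S2, O2, f, i) /\ S2 = post S1 a /\ O2 = set0 /\ i = 0 /\ tight S2 f
  | inr (S1, O1, f, i), inr (S2, O2, f', i') =>
      P (S1, O1, f, i) /\ P (S2, O2, f', i') /\ S2 = post S1 a /\
          (forall q q', q \in S1 -> q' \in delta q a -> f' q' <= f q) /\
          rank f = rank f' /\ tight S2 f' /\
          (
          (O1 = set0 /\ i' = (i + 2) %% (rank f').+1 /\ O2 = S2 :&: preimg f' i')
          \/ (O1 != set0 /\ i' = i /\ O2 = post O1 a :&: preimg f' i))
  | inr _, inl _ => False
  end.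

Definition sinit (x : sstate) : Prop := x = inl (binit A).

Definition sacc (P : Q2state -> Prop) (x : sstate) : Prop :=
  x = inl set0 \/
  exists S1 f i, x = inr (S1, set0, f, i) /\ P (S1, set0, f, i).

Definition schewe (P : Q2state -> Prop) : rbuchi Sigma :=
  @RBuchi Sigma sstate (strans P) sinit (sacc P).

Definition B_S : rbuchi Sigma := schewe inQ2.
Definition B_S_di : rbuchi Sigma := schewe inQ2di.

End Construction.

From mathcomp Require Import all_boot boolp.
Set Implicit Arguments. Unset Strict Implicit. Unset Printing Implicit Defensive.

(* Only L(B_S) <= L(B_S^di) needs an argument, as Q2^di is contained in Q2.
   If the run DAG of A on alpha dies out, B_S^di accepts through Q1 alone.
   Otherwise an accepting run of B_S provides, from some level b on, an odd
   ranking f of the run DAG in which every path of constant even rank is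
   finite, because the breakpoint O empties infinitely often.  Hence the
   Kupferman-Vardi pruning of the DAG from level b, which alternately removes
   the finite and the F-free vertices, ends after 2n+1 rounds, and the round
   in which a vertex is removed is a ranking kv_rank below f.  This canonical
   ranking respects direct simulation: a simulating vertex mimics every path
   of the simulated one and visits F whenever it does.  Eventually kv_rank
   has a constant odd rank and is tight, and its even-ranked paths are
   finite, so Schewe's construction driven by kv_rank is an accepting run of
   B_S^di. *)

Lemma nonincreasing_stabilizes (f : nat -> nat) b :
  (forall j, b <= j -> f j.+1 <= f j) ->
  exists2 m, b <= m & forall j, m <= j -> f j = f m.
Proof.
move=> f_dec.
have f_mono i j : b <= i -> i <= j -> f j <= f i.
  move=> bi /subnKC <-; elim: (j - i) => [|d IH]; first by rewrite addn0.
  by rewrite addnS (leq_trans (f_dec _ _) IH) // (leq_trans bi) ?leq_addr.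
have f_val : exists v, `[< exists2 j, b <= j & f j = v >].
  by exists (f b); apply/asboolP; exists b.
case: (ex_minnP f_val) => _ /asboolP [m bm <-] f_min; exists m => // j mj.
apply/eqP; rewrite eqn_leq f_mono //=; apply/f_min/asboolP; exists j => //.
exact: leq_trans mj.
Qed.

Section Simulation.
Variables (Sigma : finType) (A : buchi Sigma).
Local Notation Q := (bst A).
Local Notation delta := (@bdelta _ A).
Local Notation F := (bfin A).

(* Spoiler's plays from [p'] are the tails of his plays from [p] that start
   with [p -a-> p'], so Duplicator keeps the same strategy. *)
Lemma di_sim_step p q a p' : di_sim p q -> p' \in delta p a ->
  exists2 q', q' \in delta q a & di_sim p' q'.
Proof.
case=> sg [sg_valid sg_wins] pp'.
exists (sg q p a p'); first exact: sg_valid.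
exists sg; split => // beta pi [pi0 pi_step] i pi_fin.
pose beta' k := if k is k'.+1 then beta k' else a.
pose pi' k := if k is k'.+1 then pi k' else p.
have run' : is_run p beta' pi'.
  by split => // -[|k] /=; [rewrite pi0 | exact: pi_step].
have dup_shift k : dup_trace sg q beta' pi' k.+1 = dup_trace sg (sg q p a p') beta pi k.
  elim: k => [|k IH]; first by rewrite /= pi0.
  by rewrite -[LHS]/(sg (dup_trace sg q beta' pi' k.+1) (pi k) (beta k) (pi k.+1)) IH.
by rewrite -dup_shift; apply: sg_wins run' _ _.
Qed.

Lemma complete_run (alpha : word Sigma) q : complete A ->
  exists rho, @is_run _ A q alpha rho.
Proof.
move=> A_complete.
pose next x a := odflt x [pick y in delta x a].
have next_in x a : next x a \in delta x a.
  rewrite /next; case: pickP => [y //|no_succ] /=.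
  by have /set0Pn [y] := A_complete x a; rewrite no_succ.
by exists (fix run k := if k is k'.+1 then next (run k') (alpha k') else q).
Qed.

Lemma di_sim_fin (a : Sigma) p q : complete A -> di_sim p q -> p \in F -> q \in F.
Proof.
move=> A_complete [sg [_ sg_wins]] pF.
have [rho rho_run] := complete_run (fun=> a) p A_complete.
by apply: (sg_wins _ _ rho_run 0); case: rho_run => ->.
Qed.

End Simulation.

Section RunDAG.
Variables (Sigma : finType) (A : buchi Sigma) (alpha : word Sigma).
Local Notation Q := (bst A).
Local Notation delta := (@bdelta _ A).
Local Notation F := (bfin A).

Lemma tight_setT (S : {set Q}) (f : {ffun Q -> nat}) : tight S f -> tight [set: Q] f.
Proof.
case=> rank_odd S_ranks _; split => // [k k_odd k_le|q]; last by rewrite inE.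
by have [s _ fs] := S_ranks k k_odd k_le; exists s.
Qed.

Lemma post_subset (O S : {set Q}) a : O \subset S -> post O a \subset post S a.
Proof.
move=> OS; apply/subsetP => x /bigcupP [q qO qx]; apply/bigcupP; exists q => //.
exact: (subsetP OS).
Qed.

Fixpoint level j : {set Q} :=
  if j is j'.+1 then post (level j') (alpha j') else binit A.

Lemma level_succ j q q' : q \in level j -> q' \in delta q (alpha j) ->
  q' \in level j.+1.
Proof. by move=> qj qq'; apply/bigcupP; exists q. Qed.

Lemma level_pred j q' : q' \in level j.+1 ->
  exists2 q, q \in level j & q' \in delta q (alpha j).
Proof. by move/bigcupP. Qed.

Lemma level_empty_stable j k : level j = set0 -> j <= k -> level k = set0.
Proof.
move=> level_j /subnKC <-; elim: (k - j) => [|d IH]; first by rewrite addn0.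
rewrite addnS /= IH; apply/setP => x; rewrite inE.
by apply/negbTE/bigcupP => -[q]; rewrite inE.
Qed.

(* The run DAG of [A] on [alpha] has the vertices [(q, j)] with
   [q \in level j]; [dpath H q j x y] is a path in it from [(q, j)] to
   [(x, y)] all of whose vertices satisfy [H]. *)
Definition dag_from b q j : Prop := b <= j /\ q \in level j.

Inductive dpath (H : Q -> nat -> Prop) (q : Q) (j : nat) : Q -> nat -> Prop :=
| dpath0 : H q j -> dpath H q j q j
| dpathS x y x' : dpath H q j x y -> x' \in delta x (alpha y) -> H x' y.+1 ->
    dpath H q j x' y.+1.

Definition bounded (H : Q -> nat -> Prop) q j : Prop :=
  exists N, forall x y, dpath H q j x y -> y < N.

Definition Ffree (H : Q -> nat -> Prop) q j : Prop :=
  forall x y, dpath H q j x y -> x \notin F.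

Section Paths.
Variable H : Q -> nat -> Prop.

Lemma dpath_ends q j x y : dpath H q j x y -> H q j /\ H x y.
Proof. by elim=> // x0 y0 x' _ [Hq _] _ Hx'. Qed.

Lemma dpath_restrict (H' : Q -> nat -> Prop) q j :
  (forall x y, dpath H q j x y -> H' x y) ->
  forall x y, dpath H q j x y -> dpath H' q j x y.
Proof.
move=> HH' x y r; elim: r HH' => [Hq|x0 y0 x' r IH xx' Hx'] HH'.
  by apply/dpath0/HH'/dpath0.
exact: dpathS (IH HH') xx' (HH' _ _ (dpathS r xx' Hx')).
Qed.

Lemma dpath_sub (H' : Q -> nat -> Prop) q j x y :
  (forall x y, H x y -> H' x y) -> dpath H q j x y -> dpath H' q j x y.
Proof. by move=> HH'; apply: dpath_restrict => x0 y0 /dpath_ends [_ /HH']. Qed.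

Lemma dpath_cons q j q' x y : H q j -> q' \in delta q (alpha j) ->
  dpath H q' j.+1 x y -> dpath H q j x y.
Proof.
move=> Hq qq'; elim=> [Hq'|x0 y0 x' _ IH xx' Hx']; last exact: dpathS IH xx' Hx'.
exact: dpathS (dpath0 Hq) qq' Hq'.
Qed.

Lemma dpath_head q j x y : dpath H q j x y ->
  (x = q /\ y = j) \/ exists2 q', q' \in delta q (alpha j) & dpath H q' j.+1 x y.
Proof.
elim=> [Hq|x0 y0 x' r [[-> ->]|[q' qq' r']] xx' Hx']; first by left.
  by right; exists x' => //; apply: dpath0.
by right; exists q' => //; apply: dpathS r' xx' Hx'.
Qed.

Lemma dpath_prefix q j x y z : dpath H q j x y -> j <= z <= y ->
  exists x', dpath H q j x' z.
Proof.
elim=> [Hq|x0 y0 x' r IH xx' Hx'].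
  by move=> /andP[jz zj]; exists q; rewrite (@anti_leq z j) ?jz ?zj //; apply: dpath0.
move=> /andP[jz]; rewrite leq_eqVlt => /orP[/eqP ->|z_lt].
  by exists x'; apply: dpathS r xx' Hx'.
by apply: IH; rewrite jz.
Qed.

Lemma dpath_last q j x y : dpath H q j x y.+1 -> j <= y ->
  exists2 x', dpath H q j x' y & x \in delta x' (alpha y).
Proof.
move=> r jy.
suff last_edge x1 y1 : dpath H q j x1 y1 -> y1 = y.+1 ->
    exists2 x', dpath H q j x' y & x1 \in delta x' (alpha y).
  exact: last_edge r erefl.
case=> [_ jE|x0 y0 x' r' xx' _ [<-]]; last by exists x0.
by move: jy; rewrite jE ltnn.
Qed.

Lemma bounded_uniform (P : Q -> Prop) j : (forall q, P q -> bounded H q j) ->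
  exists N, forall q x y, P q -> dpath H q j x y -> y < N.
Proof.
move=> P_bounded.
have q_bound q : exists N, P q -> forall x y, dpath H q j x y -> y < N.
  by case: (pselect (P q)) => [/P_bounded [N N_bound]|nPq]; [exists N | exists 0].
have [N N_bound] := fin_all_exists q_bound.
exists (\max_q N q) => q x y Pq r; exact: leq_trans (N_bound q Pq x y r) (leq_bigmax q).
Qed.

(* Koenig's lemma. *)
Lemma backward_closed_unbounded b m : b <= m ->
  (forall q j, H q j -> dag_from b q j) ->
  (forall q q' j, b <= j -> q \in level j -> q' \in delta q (alpha j) ->
     H q' j.+1 -> H q j) ->
  (forall j, m <= j -> exists q, H q j) ->
  exists2 q, H q m & ~ bounded H q m.
Proof.
move=> bm H_dag H_pred H_inf.
have ancestor d x : H x (m + d) -> exists q, dpath H q m x (m + d).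
  elim: d x => [|d IH] x; first by rewrite addn0 => Hx; exists x; apply: dpath0.
  rewrite addnS => Hx; have [_ /level_pred [x' x'_lvl x'x]] := H_dag _ _ Hx.
  have [|q r] := IH x'.
    by apply: H_pred x'x Hx; rewrite // (leq_trans bm) ?leq_addr.
  by exists q; apply: dpathS r x'x Hx.
apply: contrapT => no_unbounded.
have [N N_bound] : exists N, forall q x y, H q m -> dpath H q m x y -> y < N.
  apply: bounded_uniform => q Hq; apply: contrapT => q_unb.
  by apply: no_unbounded; exists q.
have [x Hx] := H_inf (m + N) (leq_addr _ _).
have [q r] := ancestor _ _ Hx.
by have := N_bound _ _ _ (dpath_ends r).1 r; rewrite ltnNge leq_addl.
Qed.

End Paths.

Definition same_rank b (f : nat -> {ffun Q -> nat}) e x y : Prop :=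
  dag_from b x y /\ f y x = e.

(* [O] and [I] evolve like the components [O] and [i] of the states of
   [B_S] from level [b] on, for rankings [f] of rank [r]. *)
Section Breakpoints.
Variables (b r : nat) (f : nat -> {ffun Q -> nat}) (O : nat -> {set Q}) (I : nat -> nat).
Hypothesis breakpoint_step : forall j, b <= j ->
  if O j == set0 then
    I j.+1 = (I j + 2) %% r.+1 /\ O j.+1 = level j.+1 :&: preimg (f j.+1) (I j.+1)
  else I j.+1 = I j /\ O j.+1 = post (O j) (alpha j) :&: preimg (f j.+1) (I j).

Lemma breakpoint_index_const s u : b <= s -> (forall y, s <= y < u -> O y != set0) ->
  forall y, s <= y <= u -> I y = I s.
Proof.
move=> bs O_ne y /andP [sy yu]; move: yu; rewrite -(subnKC sy).
elim: (y - s) => [|d IH]; first by rewrite addn0.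
rewrite addnS => sdu; have := breakpoint_step (leq_trans bs (leq_addr d s)).
by rewrite (negbTE (O_ne (s + d) _)) ?leq_addr // => -[-> _]; apply/IH/ltnW.
Qed.

Lemma breakpoint_stretch s u : b <= s -> (forall y, s <= y < u -> O y != set0) ->
  forall y, s <= y < u -> O y.+1 = post (O y) (alpha y) :&: preimg (f y.+1) (I s).
Proof.
move=> bs O_ne y /andP [sy yu]; have := breakpoint_step (leq_trans bs sy).
rewrite (negbTE (O_ne y _)) ?sy // => -[_ ->].
by rewrite (breakpoint_index_const bs O_ne (y := y)) ?sy ?(ltnW yu).
Qed.

Lemma next_breakpoint s : (forall N, exists2 t, N <= t & O t = set0) ->
  exists u, [/\ s <= u, O u = set0 & forall y, s <= y < u -> O y != set0].
Proof.
move=> O_recur; have O_after : exists u, (s <= u) && (O u == set0).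
  by have [u su Ou] := O_recur s; exists u; rewrite su Ou eqxx.
case: (ex_minnP O_after) => u /andP [su /eqP Ou] u_min; exists u; split => //.
move=> y /andP [sy yu]; apply/negP => /eqP Oy.
by have := u_min y; rewrite sy Oy eqxx leqNgt yu => /(_ isT).
Qed.

(* From the breakpoint [t] on, [O] contains every path of rank [e] until it
   empties at [u]. *)
Lemma same_rank_paths_end e q j t u : b <= t -> j <= t -> O t = set0 -> I t.+1 = e ->
  t < u -> O u = set0 -> (forall y, t < y < u -> O y != set0) ->
  bounded (same_rank b f e) q j.
Proof.
move=> bt jt Ot It tu Ou O_ne.
have in_O d x : t.+1 + d <= u -> dpath (same_rank b f e) q j x (t.+1 + d) ->
    x \in O (t.+1 + d).
  elim: d x => [|d IH] x du qx.
    rewrite addn0 in qx *; have [_ [[_ x_lvl] fx]] := dpath_ends qx.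
    have := breakpoint_step bt; rewrite Ot eqxx It => -[_ ->].
    by rewrite !inE x_lvl fx eqxx.
  move: du qx; rewrite addnS => du qx.
  have jtd : j <= t.+1 + d := leq_trans jt (leq_trans (leqnSn t) (leq_addr _ _)).
  have [x' qx' x'x] := dpath_last qx jtd.
  have [_ [_ fx]] := dpath_ends qx.
  rewrite (breakpoint_stretch (leqW bt) O_ne (y := t.+1 + d)) ?du ?leq_addr //.
  rewrite It !inE fx eqxx andbT; apply/bigcupP; exists x' => //.
  exact: IH (ltnW du) qx'.
exists u => x y qx; rewrite ltnNge; apply/negP => uy.
case: (dpath_prefix qx (z := u)) => [|x' qx'].
  by rewrite uy (leq_trans jt (ltnW tu)).
by have := in_O (u - t.+1) x'; rewrite subnKC // Ou inE => /(_ (leqnn _) qx').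
Qed.

Section Recurrence.
Hypothesis O_recur : forall N, exists2 t, N <= t & O t = set0.

Lemma breakpoint_index_cycle s k : b <= s -> O s = set0 ->
  exists t, [/\ s <= t, O t = set0 & I t.+1 = (I s.+1 + 2 * k) %% r.+1].
Proof.
move=> bs Os; elim: k => [|k [t [st Ot It]]].
  exists s; split => //; rewrite muln0 addn0 modn_small //.
  by have := breakpoint_step bs; rewrite Os eqxx => -[-> _]; rewrite ltn_pmod.
have bt : b <= t := leq_trans bs st.
have [u [tu Ou O_ne]] := next_breakpoint t.+1 O_recur.
exists u; split => //; first exact: leq_trans st (ltnW tu).
have := breakpoint_step (leq_trans bt (ltnW tu)); rewrite Ou eqxx => -[-> _].
rewrite (breakpoint_index_const (leqW bt) O_ne (y := u)) ?tu ?leqnn // It.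
by rewrite modnDml mulnS (addnC 2) addnA.
Qed.

Lemma even_rank_paths_bounded e q j : odd r ->
  (forall j, b <= j -> ~~ odd (I j)) -> ~~ odd e -> e <= r ->
  bounded (same_rank b f e) q j.
Proof.
move=> r_odd I_even e_even er.
have [s [jbs Os _]] := next_breakpoint (maxn j b) O_recur.
have bs : b <= s := leq_trans (leq_maxr _ _) jbs.
have js : j <= s := leq_trans (leq_maxl _ _) jbs.
set i0 := I s.+1.
have i0r : i0 < r.+1.
  rewrite /i0; have := breakpoint_step bs; rewrite Os eqxx => -[-> _].
  exact: ltn_pmod.
(* [k] steps of [+2] lead from [i0] to [e] modulo the even number [r + 1]. *)
set k := (r.+1 - i0 + e)./2.
have i0k : i0 + 2 * k = r.+1 + e.
  have sum_even : odd (r.+1 - i0 + e) = false.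
    rewrite oddD oddB ?(ltnW i0r) //= r_odd /= (negbTE (I_even _ (leqW bs))).
    by rewrite (negbTE e_even).
  have := odd_double_half (r.+1 - i0 + e); rewrite sum_even add0n => halfK.
  by rewrite mul2n /k halfK addnA subnKC // ltnW.
have [t [st Ot It]] := breakpoint_index_cycle k bs Os.
rewrite -/i0 i0k modnDl modn_small ?ltnS // in It.
have [u [tu Ou O_ne]] := next_breakpoint t.+1 O_recur.
exact: (@same_rank_paths_end e q j t u (leq_trans bs st) (leq_trans js st)).
Qed.

End Recurrence.

Lemma breakpoints_recur : (forall j, b <= j -> ~~ odd (I j)) ->
  (forall j, b <= j -> O j \subset level j :&: preimg (f j) (I j)) ->
  (forall e q j, ~~ odd e -> bounded (same_rank b f e) q j) ->
  forall N, exists2 t, N <= t & O t = set0.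
Proof.
move=> I_even O_sub paths_bounded N; apply: contrapT => no_breakpoint.
set D := maxn N b.
have bD : b <= D := leq_maxr _ _.
have O_ne y : D <= y -> O y != set0.
  move=> Dy; apply/eqP => Oy; apply: no_breakpoint; exists y => //.
  exact: leq_trans (leq_maxl _ _) Dy.
have ancestor d x : x \in O (D + d) ->
    exists2 q, q \in O D & dpath (same_rank b f (I D)) q D x (D + d).
  elim: d x => [|d IH] x.
    rewrite addn0 => xO; exists x => //; apply: dpath0.
    have := subsetP (O_sub D bD) x xO; rewrite !inE => /andP [x_lvl /eqP fx].
    by split; first split.
  have O_ne_D y : D <= y < (D + d).+1 -> O y != set0.
    by case/andP => Dy _; apply: O_ne.
  rewrite addnS (breakpoint_stretch bD O_ne_D) ?leq_addr ?ltnSn //.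
  rewrite !inE => /andP [/bigcupP [x' x'O x'x] /eqP fx].
  have [q qO qx'] := IH x' x'O; have [_ [[_ x'_lvl] _]] := dpath_ends qx'.
  have x_lvl := level_succ x'_lvl x'x.
  exists q => //; apply: dpathS qx' x'x _; split => //; split => //.
  exact: leq_trans bD (leqW (leq_addr _ _)).
have [M M_bound] := bounded_uniform (P := fun q => q \in O D) (j := D)
  (fun q _ => paths_bounded (I D) q D (I_even D bD)).
have /set0Pn [x xO] := O_ne (D + M) (leq_addr _ _).
have [q qO qx] := ancestor M x xO.
by have := M_bound q x _ qO qx; rewrite ltnNge leq_addl.
Qed.

End Breakpoints.

Section Pruning.
Hypothesis A_complete : complete A.
Variable b : nat.

(* Kupferman and Vardi's sub-DAGs: [prune k.+1] removes from [prune k] the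
   vertices with finitely many descendants if [k] is even, and those without
   accepting descendants if [k] is odd. *)
Fixpoint prune k : Q -> nat -> Prop :=
  if k is k'.+1 then
    fun q j => prune k' q j /\
      (if odd k' then ~ Ffree (prune k') q j else ~ bounded (prune k') q j)
  else dag_from b.

Lemma prune_dag k q j : prune k q j -> dag_from b q j.
Proof. by elim: k => [//|k IH] [/IH]. Qed.

Lemma prune_le k k' q j : k <= k' -> prune k' q j -> prune k q j.
Proof.
move=> /subnKC <-; elim: (k' - k) => [|d IH]; first by rewrite addn0.
by rewrite addnS => -[/IH].
Qed.

Lemma prune_pred k q q' j : b <= j -> q \in level j -> q' \in delta q (alpha j) ->
  prune k q' j.+1 -> prune k q j.
Proof.
move=> bj q_lvl qq'; elim: k => [_|k IH [/IH prune_q q'_kept]]; first by split.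
split => //; case: ifP q'_kept => _ q'_kept q_removed; apply: q'_kept.
  by move=> x y q'x; apply: q_removed; apply: dpath_cons prune_q qq' q'x.
have [N N_bound] := q_removed; exists N => x y q'x.
by apply: N_bound; apply: dpath_cons prune_q qq' q'x.
Qed.

Lemma prune_sim k p q j : di_sim p q -> prune k p j -> q \in level j -> prune k q j.
Proof.
elim: k p q j => [|k IH] p q j pq; first by case=> bj _ q_lvl; split.
case=> prune_p p_kept q_lvl; have prune_q := IH _ _ _ pq prune_p q_lvl.
have path_sim x y : dpath (prune k) p j x y ->
    exists2 x', dpath (prune k) q j x' y & di_sim x x'.
  elim=> [_|x0 y0 x1 _ [x0' qx0' x0x0'] x0x1 prune_x1].
    by exists q => //; apply: dpath0.
  have [x1' x0'x1' x1x1'] := di_sim_step x0x0' x0x1.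
  have [_ x0'_lvl] := prune_dag (dpath_ends qx0').2.
  have x1'_lvl := level_succ x0'_lvl x0'x1'.
  by exists x1' => //; apply: dpathS qx0' x0'x1' (IH _ _ _ x1x1' prune_x1 x1'_lvl).
split => //; case: ifP p_kept => _ p_kept q_removed; apply: p_kept.
  move=> x y px; have [x' qx' xx'] := path_sim x y px; apply/negP => xF.
  by have := q_removed x' y qx'; rewrite (di_sim_fin (alpha 0) A_complete xx' xF).
have [N N_bound] := q_removed; exists N => x y px.
by have [x' qx' _] := path_sim x y px; apply: N_bound qx'.
Qed.

Lemma prune_odd_succ k q j : odd k -> prune k q j ->
  exists2 q', q' \in delta q (alpha j) & prune k q' j.+1.
Proof.
case: k => [//|k] /= k_even [prune_q]; rewrite (negbTE k_even) => q_unbounded.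
apply: contrapT => no_succ; apply: q_unbounded.
have [|N N_bound] := @bounded_uniform (prune k)
  (fun q' => q' \in delta q (alpha j) /\ prune k q' j.+1) j.+1.
  move=> q' [qq' prune_q']; apply: contrapT => q'_unbounded; apply: no_succ.
  by exists q' => //; split => //; rewrite (negbTE k_even).
exists (maxn j.+1 N) => x y qx; case: (dpath_head qx) => [[_ ->]|[q' qq' q'x]].
  by rewrite leq_max ltnSn.
by rewrite leq_max (N_bound q' x y (conj qq' (dpath_ends q'x).1) q'x) orbT.
Qed.

Lemma prune_odd_unbounded k q j : odd k -> prune k q j -> ~ bounded (prune k) q j.
Proof.
move=> k_odd prune_q.
have long_path d : exists x, dpath (prune k) q j x (j + d).
  elim: d => [|d [x qx]]; first by exists q; rewrite addn0; apply: dpath0.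
  have [x' xx' prune_x'] := prune_odd_succ k_odd (dpath_ends qx).2.
  by exists x'; rewrite addnS; apply: dpathS qx xx' prune_x'.
case=> N N_bound; have [x qx] := long_path N.
by have := N_bound _ _ qx; rewrite ltnNge leq_addl.
Qed.

Section RankingBound.
Variable phi : nat -> {ffun Q -> nat}.
Hypothesis phi_edge : forall q q' j, b <= j -> q \in level j ->
  q' \in delta q (alpha j) -> phi j.+1 q' <= phi j q.
Hypothesis phi_fin_even : forall q j, b <= j -> q \in F -> ~~ odd (phi j q).
Hypothesis phi_even_bounded : forall q j, dag_from b q j -> ~~ odd (phi j q) ->
  bounded (same_rank b phi (phi j q)) q j.

Lemma dpath_prune_rank k q j x y : dpath (prune k) q j x y -> phi y x <= phi j q.
Proof.
elim=> // x0 y0 x1 qx0 IH x0x1 _; apply: leq_trans IH.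
by have [by0 x0_lvl] := prune_dag (dpath_ends qx0).2; apply: phi_edge x0x1.
Qed.

Lemma prune_le_rank k q j : prune k q j -> k <= phi j q.
Proof.
elim: k q j => [//|k IH] q j [prune_q q_kept].
rewrite ltn_neqAle IH // andbT; apply/eqP => phi_q; case: ifP q_kept => k_par; apply.
  move=> x y qx; apply/negP => xF.
  have phi_x : phi y x = k.
    apply/eqP; rewrite eqn_leq {1}phi_q (dpath_prune_rank qx) IH //.
    exact: (dpath_ends qx).2.
  by have := phi_fin_even (prune_dag (dpath_ends qx).2).1 xF; rewrite phi_x k_par.
have [|N N_bound] := phi_even_bounded (prune_dag prune_q); first by rewrite -phi_q k_par.
exists N => x y qx; apply: N_bound; apply: dpath_restrict qx => x0 y0 qx0.
have prune_x0 := (dpath_ends qx0).2; split; first exact: prune_dag prune_x0.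
by apply/eqP; rewrite eqn_leq (dpath_prune_rank qx0) -phi_q IH.
Qed.

End RankingBound.

Section CanonicalRanking.
Local Notation K := (2 * nQ A).+1.
Hypothesis prune_vanishes : forall q j, ~ prune K q j.

Definition kv_rank j : {ffun Q -> nat} :=
  [ffun q => \max_(k < K | `[< prune k q j >]) k].

Lemma kv_rankP k q j : dag_from b q j -> prune k q j <-> k <= kv_rank j q.
Proof.
move=> q_dag; rewrite ffunE; split => [prune_q|k_le].
  have kK : k < K.
    by rewrite ltnNge; apply/negP => Kk; apply: prune_vanishes (prune_le Kk prune_q).
  exact: (@leq_bigmax_cond _ _ (fun i : 'I_K => i) (Ordinal kK) (asboolT prune_q)).
apply: contrapT => not_prune; case: k k_le not_prune => [_|k k_le not_prune].
  by apply.
have : \max_(i < K | `[< prune i q j >]) i <= k.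
  apply/bigmax_leqP => i /asboolP prune_i; rewrite leqNgt; apply/negP => ki.
  by apply: not_prune; apply: prune_le ki prune_i.
by rewrite leqNgt k_le.
Qed.

Lemma kv_rank_out q j : ~ dag_from b q j -> kv_rank j q = 0.
Proof.
move=> not_dag; rewrite ffunE; apply/eqP; rewrite -leqn0.
by apply/bigmax_leqP => i /asboolP /prune_dag.
Qed.

Lemma kv_rank_le q j : kv_rank j q <= 2 * nQ A.
Proof. by rewrite ffunE; apply/bigmax_leqP => i _; rewrite -ltnS. Qed.

Lemma kv_rank_removed q j : dag_from b q j -> ~ prune (kv_rank j q).+1 q j.
Proof. by move=> q_dag /(kv_rankP _ q_dag); rewrite ltnn. Qed.

Lemma kv_rank_edge q q' j : b <= j -> q \in level j -> q' \in delta q (alpha j) ->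
  kv_rank j.+1 q' <= kv_rank j q.
Proof.
move=> bj q_lvl qq'; have q'_dag : dag_from b q' j.+1.
  by split; [exact: leqW | exact: level_succ qq'].
apply/(kv_rankP _ (conj bj q_lvl))/(prune_pred bj q_lvl qq').
exact/(kv_rankP _ q'_dag).
Qed.

Lemma kv_rank_fin_even q j : q \in F -> ~~ odd (kv_rank j q).
Proof.
move=> qF; case: (pselect (dag_from b q j)) => q_dag; last by rewrite kv_rank_out.
have prune_q : prune (kv_rank j q) q j by apply/(kv_rankP _ q_dag).
apply/negP => k_odd; apply: (kv_rank_removed q_dag); split => //.
by rewrite k_odd => q_Ffree; have := q_Ffree q j (dpath0 prune_q); rewrite qF.
Qed.

Lemma kv_same_rank_bounded b' e q j : b <= b' -> ~~ odd e ->
  bounded (same_rank b' kv_rank e) q j.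
Proof.
move=> bb' e_even.
case: (pselect (same_rank b' kv_rank e q j)) => [[[b'j q_lvl] kq]|q_out]; last first.
  by exists 0 => x y qx; case: (q_out (dpath_ends qx).1).
have q_dag : dag_from b q j := conj (leq_trans bb' b'j) q_lvl.
have prune_q : prune e q j by apply/(kv_rankP _ q_dag); rewrite kq.
have [N N_bound] : bounded (prune e) q j.
  apply: contrapT => q_unbounded; apply: (kv_rank_removed q_dag).
  by rewrite kq; split => //; rewrite (negbTE e_even).
exists N => x y qx; apply: N_bound; apply: dpath_sub qx => x0 y0 [[b'y0 x0_lvl] kx0].
by apply/(kv_rankP _ (conj (leq_trans bb' b'y0) x0_lvl)); rewrite kx0.
Qed.

Lemma kv_rank_sim p q j : di_sim p q -> b <= j -> p \in level j -> q \in level j ->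
  kv_rank j p <= kv_rank j q.
Proof.
move=> pq bj p_lvl q_lvl; apply/(kv_rankP _ (conj bj q_lvl)).
by apply: prune_sim pq _ q_lvl; apply/(kv_rankP _ (conj bj p_lvl)).
Qed.

Definition kv_max j : nat := rank (kv_rank j).

Lemma kv_rank_le_max q j : kv_rank j q <= kv_max j.
Proof. exact: leq_bigmax. Qed.

Lemma kv_max_succ j : b <= j -> kv_max j.+1 <= kv_max j.
Proof.
move=> bj; apply/bigmax_leqP => q' _; case: (boolP (q' \in level j.+1)) => q'_lvl.
  have [q q_lvl qq'] := level_pred q'_lvl.
  exact: leq_trans (kv_rank_edge bj q_lvl qq') (kv_rank_le_max _ _).
by rewrite kv_rank_out // => -[_]; apply/negP.
Qed.

Lemma odd_rank_persists o q j : odd o -> dag_from b q j -> kv_rank j q = o ->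
  forall j', j <= j' -> exists2 q', q' \in level j' & kv_rank j' q' = o.
Proof.
move=> o_odd [bj q_lvl] kq j' /subnKC <-; elim: (j' - j) => [|d [q' q'_lvl kq']].
  by exists q; rewrite ?addn0.
have bjd : b <= j + d := leq_trans bj (leq_addr _ _).
have prune_q' : prune o q' (j + d).
  by apply/(kv_rankP _ (conj bjd q'_lvl)); rewrite kq'.
have [q'' q'q'' prune_q''] := prune_odd_succ o_odd prune_q'.
have q''_dag : dag_from b q'' (j + d).+1 := conj (leqW bjd) (level_succ q'_lvl q'q'').
exists q''; rewrite addnS; first exact: q''_dag.2.
apply/eqP; rewrite eqn_leq -{1}kq' (kv_rank_edge bjd q'_lvl q'q'') /=.
exact/(kv_rankP _ q''_dag).
Qed.

Section NonemptyLevels.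
Hypothesis level_nonempty : forall j, level j != set0.

Lemma kv_max_attained j : exists2 q, q \in level j & kv_rank j q = kv_max j.
Proof.
have /set0Pn [x x_lvl] := level_nonempty j.
have max_q : kv_max j = kv_rank j [arg max_(i > x) kv_rank j i].
  exact: (@bigmax_eq_arg _ x xpredT (kv_rank j) isT).
set q := [arg max_(i > x) kv_rank j i] in max_q.
case: (boolP (q \in level j)) => q_lvl; first by exists q.
exists x => //; apply/eqP; rewrite eqn_leq kv_rank_le_max max_q kv_rank_out //.
by case=> _; apply/negP.
Qed.

Section Stable.
Variable m : nat.
Hypothesis bm : b <= m.
Hypothesis kv_max_stable : forall j, m <= j -> kv_max j = kv_max m.

Lemma kv_max_odd : odd (kv_max m).
Proof.
apply: contrapT => /negP max_even.
have max_present j : m <= j -> exists q, prune (kv_max m) q j.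
  move=> mj; have [q q_lvl kq] := kv_max_attained j; exists q.
  by apply/(kv_rankP _ (conj (leq_trans bm mj) q_lvl)); rewrite kq kv_max_stable.
have [q prune_q q_unbounded] := backward_closed_unbounded bm (@prune_dag _)
  (fun q q' j bj q_lvl qq' => prune_pred bj q_lvl qq') max_present.
have q_dag := prune_dag prune_q.
have kq : kv_rank m q = kv_max m.
  by apply/eqP; rewrite eqn_leq kv_rank_le_max -(kv_rankP _ q_dag).
apply: (kv_rank_removed q_dag); rewrite kq; split => //.
by rewrite (negbTE max_even).
Qed.

(* Without a vertex of rank [o], the pruning would stall at [prune o]. *)
Lemma odd_rank_attained o : odd o -> o < kv_max m ->
  exists q j, dag_from b q j /\ kv_rank j q = o.
Proof.
move=> o_odd o_max; apply: contrapT => o_absent.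
have prune_stalls d q j : prune o q j -> prune (o + d) q j.
  elim: d q j => [|d IH] q j prune_q; first by rewrite addn0.
  have q_dag := prune_dag prune_q.
  rewrite addnS; split; first exact: IH.
  case: ifP => _ q_removed.
    have q_Ffree : Ffree (prune o) q j.
      by move=> x y qx; apply: q_removed; apply: dpath_sub IH qx.
    apply: o_absent; exists q, j; split => //; apply/eqP; rewrite eqn_leq.
    apply/andP; split; last exact/(kv_rankP _ q_dag).
    by rewrite leqNgt; apply/negP => /(kv_rankP _ q_dag) [_]; rewrite o_odd; apply.
  have [N N_bound] := q_removed; apply: (prune_odd_unbounded o_odd prune_q).
  by exists N => x y qx; apply: N_bound; apply: dpath_sub IH qx.
have [q q_lvl kq] := kv_max_attained m.
have prune_q : prune o q m by apply/(kv_rankP _ (conj bm q_lvl)); rewrite kq ltnW.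
have oK : o <= K by rewrite (leq_trans (ltnW o_max)) // -kq leqW ?kv_rank_le.
by apply: (prune_vanishes (q := q) (j := m)); rewrite -(subnKC oK); apply: prune_stalls.
Qed.

Lemma eventually_odd_ranks : exists2 L, m <= L & forall j, L <= j ->
  forall o, odd o -> o < kv_max m -> exists2 q, q \in level j & kv_rank j q = o.
Proof.
suff ranks_below c : exists2 L, m <= L & forall j, L <= j -> forall o, o < c ->
    odd o -> o < kv_max m -> exists2 q, q \in level j & kv_rank j q = o.
  have [L mL L_ranks] := ranks_below (kv_max m).
  by exists L => // j Lj o o_odd o_max; apply: L_ranks.
elim: c => [|c [L mL L_ranks]]; first by exists m.
case: (boolP (odd c && (c < kv_max m))) => [/andP [c_odd c_max]|c_skip].
  have [q [j [q_dag kq]]] := odd_rank_attained c_odd c_max.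
  exists (maxn L j); first by rewrite leq_max mL.
  move=> j' Lj' o; rewrite ltnS leq_eqVlt => /orP [/eqP -> _ _|oc].
    exact: odd_rank_persists c_odd q_dag kq _ (leq_trans (leq_maxr _ _) Lj').
  exact: L_ranks (leq_trans (leq_maxl _ _) Lj') _ oc.
exists L => // j Lj o; rewrite ltnS leq_eqVlt => /orP [/eqP -> c_odd c_max|].
  by move: c_skip; rewrite c_odd c_max.
exact: L_ranks.
Qed.

Lemma kv_max_lt : kv_max m < 2 * nQ A.
Proof.
have [q _ kq] := kv_max_attained m.
rewrite ltn_neqAle -kq kv_rank_le andbT; apply/eqP => max2n.
by have := kv_max_odd; rewrite -kq max2n mul2n odd_double.
Qed.

Section Run.
Variable L : nat.
Hypothesis mL : m <= L.
Hypothesis odd_ranks_present : forall j, L <= j -> forall o, odd o -> o < kv_max m ->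
  exists2 q, q \in level j & kv_rank j q = o.

Lemma kv_rank_tight j : L <= j -> tight (level j) (kv_rank j).
Proof.
move=> Lj; have mj := leq_trans mL Lj.
rewrite /tight -/(kv_max j) kv_max_stable //; split; first exact: kv_max_odd.
  move=> o o_odd; rewrite leq_eqVlt => /orP [/eqP ->|o_max].
    by have [q q_lvl kq] := kv_max_attained j; exists q; rewrite // kq kv_max_stable.
  exact: odd_ranks_present.
by move=> q q_out; apply: kv_rank_out => -[_]; apply/negP.
Qed.

Fixpoint breakpoints j : {set Q} * nat :=
  if j is j'.+1 then
    if j' <= L then (set0, 0) else
    let: (Oj, ij) := breakpoints j' in
    if Oj == set0 then
      let ij' := (ij + 2) %% (kv_max m).+1 in
      (level j :&: preimg (kv_rank j) ij', ij')
    else (post Oj (alpha j') :&: preimg (kv_rank j) ij, ij)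
  else (set0, 0).

Local Notation O j := (breakpoints j).1.
Local Notation I j := (breakpoints j).2.

Lemma breakpoints_step j : L.+1 <= j ->
  if O j == set0 then
    I j.+1 = (I j + 2) %% (kv_max m).+1 /\
    O j.+1 = level j.+1 :&: preimg (kv_rank j.+1) (I j.+1)
  else I j.+1 = I j /\ O j.+1 = post (O j) (alpha j) :&: preimg (kv_rank j.+1) (I j).
Proof.
move=> Lj; rewrite /= leqNgt Lj /=.
by case: (breakpoints j) => Oj ij /=; case: (Oj == set0).
Qed.

Lemma breakpoints_inv j : [/\ ~~ odd (I j), I j < (kv_max m).+1 &
  O j \subset level j :&: preimg (kv_rank j) (I j)].
Proof.
elim: j => [|j [I_even I_lt O_sub]]; first by rewrite /= sub0set.
rewrite /=; case: (leqP j L) => _ /=; first by rewrite sub0set.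
move: I_even I_lt O_sub; case: (breakpoints j) => Oj ij /= I_even I_lt O_sub.
case: (Oj == set0) => /=; split => //.
- by rewrite odd_mod ?oddD ?(negbTE I_even) //= kv_max_odd.
- exact: ltn_pmod.
- by rewrite setSI // post_subset // (subset_trans O_sub) ?subsetIl.
Qed.

Definition di_run j : sstate A :=
  if j <= L then inl (level j) else inr (level j, O j, kv_rank j, I j).

Lemma di_run_inl j : j <= L -> di_run j = inl (level j).
Proof. by rewrite /di_run => ->. Qed.

Lemma di_run_inr j : L < j -> di_run j = inr (level j, O j, kv_rank j, I j).
Proof. by move=> Lj; rewrite /di_run leqNgt Lj. Qed.

Lemma di_run_state j : L < j -> inQ2di (level j, O j, kv_rank j, I j).
Proof.
move=> Lj; have [I_even I_lt O_sub] := breakpoints_inv j.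
have I_max : I j < kv_max m.
  rewrite ltn_neqAle -ltnS I_lt andbT; apply/eqP => I_eq.
  by move: I_even; rewrite I_eq kv_max_odd.
have tight_j := kv_rank_tight (ltnW Lj).
split; last first.
  case=> p [q [p_lvl q_lvl pq kqp]].
  have bj : b <= j := leq_trans bm (leq_trans mL (ltnW Lj)).
  by have := kv_rank_sim pq bj p_lvl q_lvl; rewrite leqNgt kqp.
split => //; last by apply: (leq_trans _ kv_max_lt); rewrite ltnS.
split; last exact: tight_setT tight_j.
by split => q; [exact: kv_rank_le | exact: kv_rank_fin_even].
Qed.

Lemma di_run_trans j : strans (@inQ2di _ A) (di_run j) (alpha j) (di_run j.+1).
Proof.
case: (ltngtP j L) => [jL|Lj|->].
- by rewrite !di_run_inl // ltnW.
- rewrite !di_run_inr ?(leqW Lj) //.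
  have bj : b <= j := leq_trans bm (leq_trans mL (ltnW Lj)).
  split; first exact: di_run_state.
  split; first exact: di_run_state (leqW Lj).
  split => //; split; first by move=> q q' q_lvl qq'; apply: kv_rank_edge.
  have mj : m <= j := leq_trans mL (ltnW Lj).
  split; first by rewrite -/(kv_max j) -/(kv_max j.+1) !kv_max_stable ?(leqW mj).
  split; first exact: kv_rank_tight (leqW (ltnW Lj)).
  have := breakpoints_step Lj; rewrite -/(kv_max j.+1) kv_max_stable ?(leqW mj) //.
  by case: eqP => [-> [-> ->]|/eqP O_ne [-> ->]]; [left | right].
- rewrite di_run_inl // di_run_inr //; split; first exact: di_run_state.
  rewrite /= leqnn; split => //; split => //; split => //.
  exact: kv_rank_tight (leqnSn L).
Qed.

Lemma di_run_accepting : rlang (B_S_di A) alpha.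
Proof.
exists di_run; split; first by rewrite di_run_inl.
split; first exact: di_run_trans.
move=> N; have bL : b <= L.+1 := leq_trans bm (leq_trans mL (leqnSn L)).
have [|||t Nt Ot] := @breakpoints_recur L.+1 (kv_max m) kv_rank (fun j => O j)
    (fun j => I j) breakpoints_step _ _ _ (maxn N L.+1).
- by move=> j _; case: (breakpoints_inv j).
- by move=> j _; case: (breakpoints_inv j).
- by move=> e q j; apply: kv_same_rank_bounded.
have Lt : L < t := leq_trans (leq_maxr _ _) Nt.
exists t; split; first exact: leq_trans (leq_maxl _ _) Nt.
have := di_run_state Lt; rewrite di_run_inr // Ot => state_t.
by right; exists (level t), (kv_rank t), (I t).
Qed.

End Run.
End Stable.

Lemma kv_rank_run_accepting : rlang (B_S_di A) alpha.
Proof.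
have [m bm m_stable] := nonincreasing_stabilizes kv_max_succ.
have [L mL L_ranks] := eventually_odd_ranks bm.
exact: (di_run_accepting bm m_stable mL L_ranks).
Qed.

End NonemptyLevels.
End CanonicalRanking.
End Pruning.

Section ScheweRun.
Hypothesis A_complete : complete A.
Hypothesis level_nonempty : forall j, level j != set0.
Variable rho : nat -> sstate A.
Hypothesis rho_init : rho 0 = inl (binit A).
Hypothesis rho_trans : forall j, strans (@inQ2 _ A) (rho j) (alpha j) (rho j.+1).
Hypothesis rho_acc : forall N, exists t, N <= t /\ sacc (@inQ2 _ A) (rho t).

Definition state_set (x : sstate A) : {set Q} :=
  match x with inl S1 => S1 | inr y => y.1.1.1 end.

Definition state_q2 (x : sstate A) : Q2state A :=
  match x with inl _ => (set0, set0, [ffun=> 0], 0) | inr y => y end.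

Local Notation O j := (state_q2 (rho j)).1.1.2.
Local Notation phi j := (state_q2 (rho j)).1.2.
Local Notation I j := (state_q2 (rho j)).2.

Lemma run_state_set j : state_set (rho j) = level j.
Proof.
elim: j => [|j IH]; first by rewrite rho_init.
have := rho_trans j; case: (rho j) IH => [S1|[[[S1 O1] f1] i1]] /= <-;
  case: (rho j.+1) => [S2|[[[S2 O2] f2] i2]] //=.
- by case=> _ [-> _].
- by case=> _ [_ [-> _]].
Qed.

Lemma run_enters_Q2 : exists b y, rho b = inr y.
Proof.
have [t [_ [rho_t|[S1 [f [i [rho_t _]]]]]]] := rho_acc 0.
  by have := level_nonempty t; rewrite -run_state_set rho_t eqxx.
by exists t, (S1, set0, f, i).
Qed.

Section AfterSwitch.
Variable b : nat.
Hypothesis rho_b : exists y, rho b = inr y.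

Lemma run_inr j : b <= j -> rho j = inr (level j, O j, phi j, I j).
Proof.
move=> bj; suff [y rho_j] : exists y, rho j = inr y.
  by rewrite -run_state_set rho_j; case: y rho_j => [[[S1 O1] f1] i1].
rewrite -(subnKC bj); elim: (j - b) => [|d [y rho_y]]; first by rewrite addn0.
have := rho_trans (b + d); rewrite rho_y addnS.
by case: y rho_y => [[[S1 O1] f1] i1] _; case: (rho (b + d).+1) => // y'; exists y'.
Qed.

Lemma run_step j : b <= j ->
  strans (@inQ2 _ A) (inr (level j, O j, phi j, I j)) (alpha j)
    (inr (level j.+1, O j.+1, phi j.+1, I j.+1)).
Proof. by move=> bj; rewrite -(run_inr bj) -(run_inr (leqW bj)). Qed.

Lemma run_in_Q2 j : b <= j -> inQ2 (level j, O j, phi j, I j).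
Proof. by move=> bj; case: (run_step bj). Qed.

Lemma run_rank j : b <= j -> rank (phi j) = rank (phi b).
Proof.
move=> /subnKC <-; elim: (j - b) => [|d IH]; first by rewrite addn0.
by rewrite addnS -IH; case: (run_step (leq_addr d b)) => _ [_ [_ [_ [<- _]]]].
Qed.

Lemma run_breakpoint_step j : b <= j ->
  if O j == set0 then
    I j.+1 = (I j + 2) %% (rank (phi b)).+1 /\
    O j.+1 = level j.+1 :&: preimg (phi j.+1) (I j.+1)
  else I j.+1 = I j /\ O j.+1 = post (O j) (alpha j) :&: preimg (phi j.+1) (I j).
Proof.
move=> bj; rewrite -(run_rank (leqW bj)).
case: (run_step bj) => _ [_ [_ [_ [_ [_ [[-> [-> ->]]|[/negPf -> [-> ->]]]]]]]] //.
by rewrite eqxx.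
Qed.

Lemma run_breakpoints_recur N : exists2 t, N <= t & O t = set0.
Proof.
have [t [Nbt rho_t]] := rho_acc (maxn N b).
move: rho_t; rewrite (run_inr (leq_trans (leq_maxr _ _) Nbt)).
case=> [//|[S1 [f [i [[_ Ot _ _] _]]]]].
by exists t; first exact: leq_trans (leq_maxl _ _) Nbt.
Qed.

Lemma run_even_bounded q j : dag_from b q j -> ~~ odd (phi j q) ->
  bounded (same_rank b (fun j => phi j) (phi j q)) q j.
Proof.
move=> [bj _] e_even.
have [_ [r_odd _ _] _ _ _] := run_in_Q2 (leqnn b).
apply: (even_rank_paths_bounded run_breakpoint_step run_breakpoints_recur) => //.
  by move=> j' bj'; case: (run_in_Q2 bj').
by rewrite -(run_rank bj); apply: leq_bigmax.
Qed.

End AfterSwitch.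

Lemma schewe_run_di_accepting : rlang (B_S_di A) alpha.
Proof.
have [b rho_b] := run_enters_Q2.
apply: (@kv_rank_run_accepting A_complete b _ level_nonempty) => q j prune_q.
have [bj _] := prune_dag prune_q.
have phi_edge q1 q2 j1 : b <= j1 -> q1 \in level j1 -> q2 \in delta q1 (alpha j1) ->
    phi j1.+1 q2 <= phi j1 q1.
  by move=> bj1; case: (run_step rho_b bj1) => _ [_ [_ [phi_edge _]]]; apply: phi_edge.
have phi_fin_even q1 j1 : b <= j1 -> q1 \in F -> ~~ odd (phi j1 q1).
  move=> bj1; case: (run_in_Q2 rho_b bj1) => [[[_ fin_even] _] _ _ _ _].
  exact: fin_even.
have [[[phi_le _] _] _ _ _ _] := run_in_Q2 rho_b bj.
have := prune_le_rank phi_edge phi_fin_even (run_even_bounded rho_b) prune_q.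
by rewrite leqNgt ltnS phi_le.
Qed.

End ScheweRun.

Lemma B_S_sub_B_S_di : complete A -> rlang (B_S A) alpha -> rlang (B_S_di A) alpha.
Proof.
move=> A_complete [rho [rho_init [rho_trans rho_acc]]].
case: (pselect (exists j, level j = set0)) => [[j level_j]|level_nonempty].
  exists (fun k => inl (level k)); split => //; split => // N.
  exists (maxn N j); split; first exact: leq_maxl.
  by left; rewrite (level_empty_stable level_j (leq_maxr _ _)).
apply: (schewe_run_di_accepting A_complete _ rho_init rho_trans rho_acc) => j.
by apply/eqP => level_j; apply: level_nonempty; exists j.
Qed.

End RunDAG.

Lemma rlang_schewe_mono (Sigma : finType) (A : buchi Sigma)
    (P P' : Q2state A -> Prop) (alpha : word Sigma) :
  (forall x, P x -> P' x) -> rlang (schewe P) alpha -> rlang (schewe P') alpha.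
Proof.
move=> PP' [rho [rho_init [rho_trans rho_acc]]]; exists rho; split => //; split.
  move=> i; have := rho_trans i.
  case: (rho i) => [S1|[[[S1 O1] f1] i1]]; case: (rho i.+1) => [S2|[[[S2 O2] f2] i2]] //=.
    by case=> /PP' P'x rest.
  by case=> /PP' P'x [/PP' P'y rest].
move=> N; have [t [Nt [rho_t|[S1 [f [i [rho_t Px]]]]]]] := rho_acc N.
  by exists t; split => //; left.
exists t; split => //.
by right; exists S1, f, i; split => //; apply: PP'.
Qed.

Theorem lemma2 (Sigma : finType) (A : buchi Sigma) :
  0 < #|Sigma| -> complete A ->
  forall alpha : word Sigma, rlang (B_S_di A) alpha <-> rlang (B_S A) alpha.
Proof.
(* A word exists, so the alphabet is nonempty anyway. *)
move=> _ A_complete alpha; split; last exact: B_S_sub_B_S_di.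
by apply: rlang_schewe_mono => x [].
Qed.
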